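(* Let $P=\{x\in\mathbb R^n : Ax=b,\ x\ge 0\}$ be a polyhedron in standard form, and let $$P_A=\{(y^+,y^-)\in\mathbb R^{2n} : A(y^+-y^-)=0,\ \|y^+\|_1+\|y^-\|_1=1,\ y^+,y^-\ge 0\}.$$ Let $S:=\{(y^+,y^-) : y^+_i=\max\{g_i,0\},\ y^-_i=\max\{-g_i,0\}\ (i\le n),\ g\in\mathcal C(A)\}$ and $T:=\{(y^+,y^-) : \text{for some } i\le n,\ y^+_i=y^-_i=1,\ y^+_j=y^-_j=0\ (j\ne i)\}$. Then there is a subset $T'\subseteq T$ with $|T'|\le n$ such that $S\cup T'$ generates the extreme rays of the cone $\{(y^+,y^-): A(y^+-y^-)=0,\ y^\pm\ge0\}$, and the vertex set of $P_A$ is $S_1\cup T'_1$, where $S_1$ and $T'_1$ consist of the vectors $r/(\|y^+\|_1+\|y^-\|_1)$ for $r=(y^+,y^-)$ in $S$ and in $T'$ respectively.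
   Context: $\mathcal C(A)$ denotes the set of circuits of the standard form polyhedron: all $g\in\ker(A)\setminus\{0\}$, normalized to coprime integer components, that are support-minimal in $\ker(A)\setminus\{0\}$ (no $x\in\ker(A)\setminus\{0\}$ has $\operatorname{supp}(x)\subsetneq\operatorname{supp}(g)$). *)

From HB Require Import structures.
From mathcomp Require Import all_boot all_order all_algebra.
Set Implicit Arguments. Unset Strict Implicit. Unset Printing Implicit Defensive.
Import Order.TTheory GRing.Theory Num.Theory.
Local Open Scope ring_scope.

Section Defs.
Variables (R : realFieldType) (m n : nat) (A : 'M[rat]_(m, n)).

Definition AR : 'M[R]_(m, n) := map_mx (fun q : rat => ratr q) A.

Definition supp (x : 'cV[R]_n) : {set 'I_n} := [set i | x i 0 != 0].

Definition is_circuit (g : 'cV[int]_n) : Prop :=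
  let gR := map_mx (fun z : int => z%:~R) g : 'cV[R]_n in
  [/\ gR != 0, AR *m gR = 0,
      (forall d : int, (forall i, g i 0 \in dvdz d) -> d = 1 \/ d = -1) &
      ~ (exists x : 'cV[R]_n, [/\ x != 0, AR *m x = 0 & supp x \proper supp gR])].

(* points of R^{2n} are column vectors col_mx y+ y- *)
Definition yplus (y : 'cV[R]_(n + n)) : 'cV[R]_n := usubmx y.
Definition yminus (y : 'cV[R]_(n + n)) : 'cV[R]_n := dsubmx y.

Definition l1 (x : 'cV[R]_n) : R := \sum_i `|x i 0|.
Definition l1pm (y : 'cV[R]_(n + n)) : R := l1 (yplus y) + l1 (yminus y).

Definition cone_A (y : 'cV[R]_(n + n)) : Prop :=
  [/\ forall i, 0 <= yplus y i 0, forall i, 0 <= yminus y i 0 &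
      AR *m (yplus y - yminus y) = 0].

Definition P_A (y : 'cV[R]_(n + n)) : Prop := cone_A y /\ l1pm y = 1.

Definition S_set (y : 'cV[R]_(n + n)) : Prop :=
  exists g, is_circuit g /\
    y = col_mx (\col_i Num.max ((g i 0)%:~R) 0) (\col_i Num.max (- (g i 0)%:~R) 0).

Definition T_elt (i : 'I_n) : 'cV[R]_(n + n) :=
  col_mx (\col_j (j == i)%:R) (\col_j (j == i)%:R).

Definition T_set (y : 'cV[R]_(n + n)) : Prop := exists i, y = T_elt i.

Definition normalized (X : 'cV[R]_(n + n) -> Prop) (x : 'cV[R]_(n + n)) : Prop :=
  exists2 r, X r & x = (l1pm r)^-1 *: r.

Definition extreme_ray (K : 'cV[R]_(n + n) -> Prop) (r : 'cV[R]_(n + n)) : Prop :=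
  [/\ K r, r != 0 &
      forall u v, K u -> K v -> r = u + v -> exists2 c : R, 0 <= c & u = c *: r].

Definition generates_extreme_rays (K G : 'cV[R]_(n + n) -> Prop) : Prop :=
  (forall r, G r -> extreme_ray K r) /\
  (forall r, extreme_ray K r -> exists2 g, G g & exists2 c : R, 0 < c & r = c *: g).

Definition vertex (P : 'cV[R]_(n + n) -> Prop) (x : 'cV[R]_(n + n)) : Prop :=
  P x /\ forall y z (l : R), P y -> P z -> 0 < l < 1 ->
    x = l *: y + (1 - l) *: z -> y = z.

End Defs.

(* An extreme ray of K = {(y+, y-) >= 0 : A (y+ - y-) = 0} either has an index i with
   y+_i, y-_i > 0, and then subtracting a multiple of (e_i, e_i) shows that it is the ray
   of (e_i, e_i), which is extreme exactly when the i-th column of A is nonzero; or its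
   two halves have disjoint supports, so that it is (g+, g-) for the kernel vector
   g = y+ - y-.  In the second case extremality is equivalent to support-minimality of g:
   a kernel vector h with smaller support lets one move g to g +- e h without changing
   any sign, exhibiting (g+, g-) as a midpoint, while conversely any splitting of
   (g+, g-) inside K yields a kernel vector supported in supp g.  Support-minimal real
   kernel vectors of a rational matrix are multiples of rational ones, hence, after
   clearing denominators and dividing by the gcd of the entries, of circuits.  Finally,
   the vertices of P_A, the section of K by the l1-norm, are the normalized extreme
   rays of K. *)

From HB Require Import structures.
From mathcomp Require Import all_boot all_order all_algebra.
From mathcomp Require Import ring lra.
Import Order.TTheory GRing.Theory Num.Theory.
Local Open Scope ring_scope.
Set Implicit Arguments.
Unset Strict Implicit.

Lemma maxr0D (R : realDomainType) (a b : R) : 0 <= a * b ->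
  Num.max (a + b) 0 = Num.max a 0 + Num.max b 0.
Proof.
have [a0|a0] := lerP 0 a; have [b0|b0] := lerP 0 b => ab.
- by rewrite max_l ?addr_ge0.
- have -> : a = 0 by apply/le_anti; rewrite a0 -(nmulr_rge0 _ b0) mulrC ab.
  by rewrite !add0r (max_r (ltW b0)).
- have -> : b = 0 by apply/le_anti; rewrite b0 -(nmulr_rge0 _ a0) ab.
  by rewrite !addr0 (max_r (ltW a0)).
- by rewrite addr0 max_r // ltW // -(addr0 0) ltrD.
Qed.

Lemma maxr0_subN (R : realDomainType) (a : R) : Num.max a 0 - Num.max (- a) 0 = a.
Proof.
have [a0|a0] := lerP 0 a.
  by rewrite max_r ?oppr_le0 // subr0.
by rewrite max_l ?oppr_ge0 ?ltW // sub0r opprK.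
Qed.

Lemma maxr0_mulN (R : realDomainType) (a : R) : Num.max a 0 * Num.max (- a) 0 = 0.
Proof.
have [a0|a0] := lerP 0 a; last by rewrite mul0r.
by rewrite max_r ?mulr0 // oppr_le0.
Qed.

Lemma maxr0_sub (R : realDomainType) (a b : R) : 0 <= a -> 0 <= b -> a * b = 0 ->
  Num.max (a - b) 0 = a /\ Num.max (- (a - b)) 0 = b.
Proof.
move=> a0 b0 /eqP; rewrite mulf_eq0 => /orP[]/eqP->.
  by rewrite sub0r opprK; split; [apply: max_r; rewrite oppr_le0 | apply: max_l].
by rewrite subr0; split; [apply: max_l | apply: max_r; rewrite oppr_le0].
Qed.

Lemma mulr_addsub_ge0 (R : realDomainType) (a b : R) :
  `|b| <= `|a| -> 0 <= (a + b) * (a - b).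
Proof.
have [a0|a0] := lerP 0 a.
  by rewrite (ger0_norm a0) ler_norml => /andP[? ?]; rewrite mulr_ge0 //; lra.
by rewrite (ltr0_norm a0) ler_norml => /andP[? ?]; rewrite mulr_le0 //; lra.
Qed.

Section PositiveNegativeParts.
Variables (R : realDomainType) (n : nat).
Implicit Types (g h p q : 'cV[R]_n).

Definition posv g : 'cV[R]_n := \col_i Num.max (g i 0) 0.
Definition negv g : 'cV[R]_n := posv (- g).
Definition pm g : 'cV[R]_(n + n) := col_mx (posv g) (negv g).

Definition conformal g h := forall i, 0 <= g i 0 * h i 0.

Lemma posv_ge0 g i : 0 <= posv g i 0.
Proof. by rewrite mxE le_max lexx orbT. Qed.

Lemma posv_negv g : posv g - negv g = g.
Proof. by apply/colP => i; rewrite !mxE maxr0_subN. Qed.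

Lemma posvZ c g : 0 <= c -> posv (c *: g) = c *: posv g.
Proof. by move=> c0; apply/colP => i; rewrite !mxE maxr_pMr // mulr0. Qed.

Lemma negvZ c g : 0 <= c -> negv (c *: g) = c *: negv g.
Proof. by move=> c0; rewrite /negv -scalerN posvZ. Qed.

Lemma pmZ c g : 0 <= c -> pm (c *: g) = c *: pm g.
Proof. by move=> c0; rewrite /pm posvZ // negvZ // scale_col_mx. Qed.

Lemma pm0 : pm 0 = 0.
Proof. by rewrite -(scale0r (0 : 'cV[R]_n)) pmZ // scale0r. Qed.

Lemma pm_eq0 g : (pm g == 0) = (g == 0).
Proof.
apply/eqP/eqP => [|->]; last exact: pm0.
move/eqP; rewrite col_mx_eq0 => /andP[/eqP p0 /eqP n0].
by rewrite -(posv_negv g) p0 n0 subr0.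
Qed.

Lemma posvD g h : conformal g h -> posv (g + h) = posv g + posv h.
Proof. by move=> gh; apply/colP => i; rewrite !mxE maxr0D. Qed.

Lemma negvD g h : conformal g h -> negv (g + h) = negv g + negv h.
Proof. by move=> gh; rewrite /negv opprD posvD // => i; rewrite !mxE mulrNN. Qed.

Lemma pmD g h : conformal g h -> pm (g + h) = pm g + pm h.
Proof. by move=> gh; rewrite /pm posvD // negvD // add_col_mx. Qed.

Lemma pmZ_inj a b g h : a *: pm g = b *: pm h -> a *: g = b *: h.
Proof.
rewrite !scale_col_mx => /eq_col_mx[Ep En].
by rewrite -(posv_negv g) -(posv_negv h) !scalerBr Ep En.
Qed.

Lemma posv_mul_negv g i : posv g i 0 * negv g i 0 = 0.
Proof. by rewrite !mxE maxr0_mulN. Qed.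

Lemma pm_sub p q : (forall i, 0 <= p i 0) -> (forall i, 0 <= q i 0) ->
  (forall i, p i 0 * q i 0 = 0) -> pm (p - q) = col_mx p q.
Proof.
move=> p0 q0 pq; have E i := maxr0_sub (p0 i) (q0 i) (pq i).
by congr col_mx; apply/colP => i; rewrite !mxE; case: (E i).
Qed.

End PositiveNegativeParts.

Lemma small_multiple (R : realFieldType) n (g x : 'cV[R]_n) :
  supp x \subset supp g -> exists2 e : R, 0 < e & forall i, `|e * x i 0| <= `|g i 0|.
Proof.
move=> sxg; pose e := \big[Num.min/1]_(i | x i 0 != 0) (`|g i 0| / `|x i 0|).
have xg i : x i 0 != 0 -> g i 0 != 0.
  by move=> xi; have := subsetP sxg i; rewrite !inE; apply.
have e_gt0 : 0 < e.
  apply: (big_ind (fun y => 0 < y)) => // [y z y0 z0|i xi]; first by rewrite lt_min y0.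
  by rewrite divr_gt0 // normr_gt0 // xg.
exists e => // i; have [->|xi] := eqVneq (x i 0) 0; first by rewrite mulr0 normr0.
by rewrite normrM gtr0_norm // -ler_pdivlMr ?normr_gt0 //; exact: bigmin_le_cond.
Qed.

Section KernelCone.
Variables (R : realFieldType) (m n : nat) (A : 'M[rat]_(m, n)).
Local Notation AR := (AR R A).
Local Notation K := (cone_A A).
Implicit Types (g p q : 'cV[R]_n) (r u v x y : 'cV[R]_(n + n)).

Lemma coneP p q : K (col_mx p q) <->
  [/\ forall i, 0 <= p i 0, forall i, 0 <= q i 0 & AR *m (p - q) = 0].
Proof. by rewrite /cone_A /yplus /yminus col_mxKu col_mxKd. Qed.

Lemma cone_ge0 y : K y -> forall i, 0 <= y i 0.
Proof.
rewrite -[y]vsubmxK => /coneP[p0 q0 _] i.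
by case: (split_ordP i) => j ->; rewrite ?col_mxEu ?col_mxEd.
Qed.

Lemma coneZ c y : 0 <= c -> K y -> K (c *: y).
Proof.
move=> c0; rewrite -[y]vsubmxK scale_col_mx => /coneP[p0 q0 Ay]; apply/coneP; split.
- by move=> i; rewrite mxE mulr_ge0.
- by move=> i; rewrite mxE mulr_ge0.
- by rewrite -scalerBr -scalemxAr Ay scaler0.
Qed.

Lemma cone_pm g : AR *m g = 0 -> K (pm g).
Proof. by move=> Ag; apply/coneP; rewrite posv_negv; split=> // i; apply: posv_ge0. Qed.

Lemma l1pmE y : l1pm y = \sum_i `|y i 0|.
Proof.
by rewrite /l1pm /l1 big_split_ord; congr (_ + _); apply: eq_bigr => i _; rewrite mxE.
Qed.

Lemma l1pm_ge0 y : 0 <= l1pm y.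
Proof. by rewrite l1pmE sumr_ge0. Qed.

Lemma l1pmZ c y : l1pm (c *: y) = `|c| * l1pm y.
Proof. by rewrite !l1pmE mulr_sumr; apply: eq_bigr => i _; rewrite mxE normrM. Qed.

Lemma l1pm_eq0 y : (l1pm y == 0) = (y == 0).
Proof.
rewrite l1pmE psumr_eq0 //; apply/allP/eqP => [y0|-> i _]; last by rewrite /= mxE normr0.
apply/matrixP => i j; rewrite (ord1 j) mxE; apply/eqP; rewrite -normr_eq0.
exact: y0 (mem_index_enum i).
Qed.

Lemma l1pmD u v : K u -> K v -> l1pm (u + v) = l1pm u + l1pm v.
Proof.
move=> /cone_ge0 u0 /cone_ge0 v0; rewrite !l1pmE -big_split; apply: eq_bigr => i _.
by rewrite mxE !ger0_norm ?addr_ge0.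
Qed.

Lemma l1pm_gt0 y : y != 0 -> 0 < l1pm y.
Proof. by move=> y0; rewrite lt_def l1pm_eq0 y0 l1pm_ge0. Qed.

Lemma extreme_rayZ c r : 0 < c -> extreme_ray K r -> extreme_ray K (c *: r).
Proof.
move=> c0 [Kr r0 ext]; split; first exact: coneZ (ltW c0) Kr.
  by rewrite scaler_eq0 negb_or gt_eqF.
move=> u v Ku Kv E; have cn0 : c != 0 by rewrite gt_eqF.
have ci0 : 0 <= c^-1 by rewrite invr_ge0 ltW.
have r_uv : r = c^-1 *: u + c^-1 *: v by rewrite -scalerDr -E scalerK.
have [d d0 Eu] := ext _ _ (coneZ ci0 Ku) (coneZ ci0 Kv) r_uv.
by exists d; rewrite // -[u](scalerKV cn0) Eu !scalerA mulrC.
Qed.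

Lemma extreme_part r u v : extreme_ray K r -> K u -> K v -> r = u + v ->
  u = (l1pm u / l1pm r) *: r.
Proof.
case=> Kr r0 ext Ku Kv E; have [c c0 Eu] := ext _ _ Ku Kv E.
by rewrite {2}Eu l1pmZ ger0_norm // mulfK ?gt_eqF ?l1pm_gt0.
Qed.

Lemma extreme_normalized_part r a y v : extreme_ray K r -> 0 < a -> P_A A y -> K v ->
  r = a *: y + v -> y = (l1pm r)^-1 *: r.
Proof.
move=> er a0 [Ky y1] Kv E; have := extreme_part er (coneZ (ltW a0) Ky) Kv E.
by rewrite l1pmZ y1 mulr1 gtr0_norm // => Ey; apply: (scalerI (lt0r_neq0 a0)); rewrite scalerA.
Qed.

Lemma P_A_normalize y : K y -> y != 0 -> P_A A ((l1pm y)^-1 *: y).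
Proof.
move=> Ky y0; have k0 := l1pm_gt0 y0; split; first by apply: coneZ; rewrite // invr_ge0 ltW.
by rewrite l1pmZ ger0_norm ?invr_ge0 ?ltW // mulVf ?gt_eqF.
Qed.

Lemma extreme_vertex r : extreme_ray K r -> vertex (P_A A) ((l1pm r)^-1 *: r).
Proof.
move=> er; have [Kr r0 _] := er; have k0 := l1pm_gt0 r0.
split; first exact: P_A_normalize.
move=> y z l Py Pz /andP[l0 l1] E; have l'0 : 0 < 1 - l by rewrite subr_gt0.
have Er : r = (l1pm r * l) *: y + (l1pm r * (1 - l)) *: z.
  by rewrite -!scalerA -scalerDr -E scalerKV ?gt_eqF.
have a0 : 0 < l1pm r * l by rewrite mulr_gt0.
have b0 : 0 < l1pm r * (1 - l) by rewrite mulr_gt0.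
have [[Ky _] [Kz _]] := (Py, Pz).
rewrite (extreme_normalized_part er a0 Py (coneZ (ltW b0) Kz) Er).
by rewrite (extreme_normalized_part er b0 Pz (coneZ (ltW a0) Ky) (etrans Er (addrC _ _))).
Qed.

Lemma vertex_extreme x : vertex (P_A A) x -> extreme_ray K x.
Proof.
case=> -[Kx x1] vx; split => //; first by rewrite -l1pm_eq0 x1 oner_eq0.
move=> u v Ku Kv E.
have [->|u0] := eqVneq u 0; first by exists 0; rewrite ?scale0r.
have [v0|v0] := eqVneq v 0; first by exists 1; rewrite ?scale1r // E v0 addr0.
have b_def : l1pm v = 1 - l1pm u by rewrite -x1 E l1pmD // addrC addKr.
have a0 := l1pm_gt0 u0; have b0 := l1pm_gt0 v0.
have Ex : x = l1pm u *: ((l1pm u)^-1 *: u) + (1 - l1pm u) *: ((l1pm v)^-1 *: v).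
  by rewrite -b_def !scalerKV ?gt_eqF.
have a01 : 0 < l1pm u < 1 by rewrite a0 -subr_gt0 -b_def.
have yz := vx _ _ _ (P_A_normalize Ku u0) (P_A_normalize Kv v0) a01 Ex.
have -> : x = (l1pm u)^-1 *: u by rewrite Ex -yz -scalerDl addrC subrK scale1r.
by exists (l1pm u); rewrite ?scalerKV ?gt_eqF ?ltW.
Qed.

Lemma vertex_normalized G : generates_extreme_rays K G ->
  forall x, vertex (P_A A) x <-> normalized G x.
Proof.
case=> G_ext ext_G x; split => [vx|[r Gr ->]]; last exact/extreme_vertex/G_ext.
have [[_ x1] _] := vx; have [r Gr [c c0 Ex]] := ext_G _ (vertex_extreme vx).
have [_ r0 _] := G_ext r Gr; have cr : c * l1pm r = 1 by rewrite -x1 Ex l1pmZ gtr0_norm.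
by exists r => //; rewrite Ex -[c](mulfK (lt0r_neq0 (l1pm_gt0 r0))) cr mul1r.
Qed.

End KernelCone.

Section ExtremeRays.
Variables (R : realFieldType) (m n : nat) (A : 'M[rat]_(m, n)).
Local Notation AR := (AR R A).
Local Notation K := (cone_A A).
Implicit Types (i : 'I_n) (g h p q : 'cV[R]_n) (r u v : 'cV[R]_(n + n)).

Definition kernel_minimal g : Prop := [/\ g != 0, AR *m g = 0 &
  ~ exists h, [/\ h != 0, AR *m h = 0 & supp h \proper supp g]].

Lemma supp_eq0 g : (supp g == set0) = (g == 0).
Proof.
apply/eqP/eqP => [g0|->]; last by apply/setP => i; rewrite !inE mxE eqxx.
apply/matrixP => i j; rewrite (ord1 j) mxE; apply/eqP; apply: contraT => gi.
by rewrite -(in_set0 i) -g0 inE.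
Qed.

Lemma suppZ c g : c != 0 -> supp (c *: g) = supp g.
Proof. by move=> c0; apply/setP => i; rewrite !inE mxE mulf_eq0 negb_or c0. Qed.

Lemma kernel_minimal_collinear g h : kernel_minimal g -> AR *m h = 0 ->
  supp h \subset supp g -> exists c, h = c *: g.
Proof.
case=> g0 Ag g_min Ah shg; have /set0Pn[j] : supp g != set0 by rewrite supp_eq0.
rewrite inE => gj; exists (h j 0 / g j 0); apply/eqP; rewrite -subr_eq0; apply/negPn/negP => d0.
apply: g_min; exists (h - (h j 0 / g j 0) *: g); split => //.
  by rewrite mulmxBr -scalemxAr Ah Ag scaler0 subr0.
apply/properP; split; last by exists j; rewrite !inE ?mxE ?divfK ?subrr ?eqxx.
apply/subsetP => i; rewrite !inE !mxE; apply: contraR => /negPn/eqP gi.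
have : i \notin supp h by apply: contra (subsetP shg i) _; rewrite inE gi eqxx.
rewrite inE negbK => /eqP hi.
by rewrite hi gi mulr0 subr0.
Qed.

Lemma kernel_minimalZ c g : c != 0 -> kernel_minimal g -> kernel_minimal (c *: g).
Proof.
move=> c0 [g0 Ag g_min]; split; first by rewrite scaler_eq0 negb_or c0.
  by rewrite -scalemxAr Ag scaler0.
by rewrite suppZ.
Qed.

Lemma extreme_pm g : kernel_minimal g -> extreme_ray K (pm g).
Proof.
move=> gmin; have [g0 Ag _] := gmin; split; [exact: cone_pm | by rewrite pm_eq0 |].
move=> u v; rewrite -[u]vsubmxK -[v]vsubmxK.
move: (usubmx u) (dsubmx u) (usubmx v) (dsubmx v) => up un vp vn.
move=> /coneP[up0 un0 Au] /coneP[vp0 vn0 _]; rewrite add_col_mx => /eq_col_mx[Ep En].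
have le_p i : up i 0 <= posv g i 0 by rewrite Ep mxE lerDl.
have le_n i : un i 0 <= negv g i 0 by rewrite En mxE lerDl.
have disj i : up i 0 * un i 0 = 0.
  apply/eqP; rewrite eq_le mulr_ge0 // andbT -(posv_mul_negv g i).
  by rewrite ler_pM.
have [c Ec] : exists c, up - un = c *: g.
  apply: kernel_minimal_collinear => //; apply/subsetP => i; rewrite !inE !mxE.
  apply: contraR => /negPn/eqP gi.
  have [p0 n0] : posv g i 0 = 0 /\ negv g i 0 = 0 by rewrite !mxE gi oppr0 max_l.
  have up_i : up i 0 = 0 by apply/le_anti; rewrite up0 andbT -p0 le_p.
  have un_i : un i 0 = 0 by apply/le_anti; rewrite un0 andbT -n0 le_n.
  by rewrite up_i un_i subrr eqxx.
have c0 : 0 <= c.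
  have /set0Pn[j] : supp g != set0 by rewrite supp_eq0.
  rewrite inE => gj; have Ej : up j 0 - un j 0 = c * g j 0.
    by have := congr1 (fun h => h j 0) Ec; rewrite !mxE.
  have /orP[gj_lt0|gj_gt0] := lt_total gj.
    have p0 : posv g j 0 = 0 by rewrite mxE max_r // ltW.
    have up_j : up j 0 = 0 by apply/le_anti; rewrite up0 andbT -p0 le_p.
    by rewrite -(nmulr_lle0 _ gj_lt0) -Ej up_j sub0r oppr_le0.
  have n0 : negv g j 0 = 0 by rewrite !mxE max_r // oppr_le0 ltW.
  have un_j : un j 0 = 0 by apply/le_anti; rewrite un0 andbT -n0 le_n.
  by rewrite -(pmulr_lge0 _ gj_gt0) -Ej un_j subr0.
by exists c; rewrite // -(pm_sub up0 un0 disj) Ec pmZ.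
Qed.

Lemma T_eltE i : T_elt R i = col_mx (delta_mx i 0) (delta_mx i 0) :> 'cV[R]_(n + n).
Proof. by congr col_mx; apply/matrixP => j k; rewrite !mxE (ord1 k) eqxx andbT. Qed.

Lemma delta_ge0 i j : 0 <= (delta_mx i 0 : 'cV[R]_n) j 0.
Proof. by rewrite mxE ler0n. Qed.

Lemma cone_T_elt i : K (T_elt R i).
Proof. by rewrite T_eltE; apply/coneP; split=> [j|j|]; rewrite ?delta_ge0 ?subrr ?mulmx0. Qed.

Lemma T_elt_neq0 i : T_elt R i != 0.
Proof.
rewrite T_eltE col_mx_eq0 negb_and; apply/orP; left.
by apply/eqP => /matrixP/(_ i 0); rewrite !mxE !eqxx => /eqP; rewrite oner_eq0.
Qed.

Lemma delta_summand i p q : (forall j, 0 <= p j 0) -> (forall j, 0 <= q j 0) ->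
  p + q = delta_mx i 0 -> p = p i 0 *: delta_mx i 0.
Proof.
move=> p0 q0 E; apply/matrixP => j k; rewrite (ord1 k) !mxE eqxx andbT.
have [->|ji] := eqVneq j i; first by rewrite mulr1.
have /eqP := congr1 (fun h => h j 0) E; rewrite !mxE (negbTE ji) paddr_eq0 //.
by case/andP=> /eqP-> _; rewrite mulr0.
Qed.

Lemma extreme_T_eltP i : extreme_ray K (T_elt R i) <-> col i AR != 0.
Proof.
rewrite colE; split.
  case=> _ _ ext; apply/negP => /eqP Ai0; pose d : 'cV[R]_n := delta_mx i 0.
  have Ku : K (col_mx d 0).
    by apply/coneP; rewrite subr0; split=> // j; rewrite ?delta_ge0 ?mxE.
  have Kv : K (col_mx 0 d).
    apply/coneP; rewrite sub0r mulmxN Ai0 oppr0.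
    by split=> // j; rewrite ?delta_ge0 ?mxE.
  have E : T_elt R i = col_mx d 0 + col_mx 0 d by rewrite T_eltE add_col_mx addr0 add0r.
  have [c _] := ext _ _ Ku Kv E.
  rewrite T_eltE scale_col_mx => /eq_col_mx[/matrixP/(_ i 0) + /matrixP/(_ i 0)].
  by rewrite !mxE !eqxx /= mulr1 => <- /eqP; rewrite eq_sym oner_eq0.
move=> Ai; split; [exact: cone_T_elt | exact: T_elt_neq0 |].
move=> u v; rewrite T_eltE -[u]vsubmxK -[v]vsubmxK.
move: (usubmx u) (dsubmx u) (usubmx v) (dsubmx v) => up un vp vn.
move=> /coneP[up0 un0 Au] /coneP[vp0 vn0 _]; rewrite add_col_mx => /eq_col_mx[Ep En].
have Eup := delta_summand up0 vp0 (esym Ep); have Eun := delta_summand un0 vn0 (esym En).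
have : (up i 0 - un i 0) *: (AR *m delta_mx i 0 : 'cV_m) == 0.
  by rewrite scalerBl !scalemxAr -mulmxBr -Eup -Eun Au.
rewrite scaler_eq0 (negbTE Ai) orbF subr_eq0 => /eqP e.
by exists (up i 0); rewrite // scale_col_mx {1}Eup {1}Eun e.
Qed.

Lemma extreme_overlap p q i : extreme_ray K (col_mx p q) -> 0 < p i 0 -> 0 < q i 0 ->
  exists2 c, 0 < c & col_mx p q = c *: T_elt R i.
Proof.
move=> [Kr _ ext] pi qi; have /coneP[p0 q0 Apq] := Kr.
pose t := Num.min (p i 0) (q i 0); have t0 : 0 < t by rewrite lt_min pi qi.
pose d : 'cV[R]_n := delta_mx i 0.
have le_td (w : 'cV[R]_n) j : (forall j, 0 <= w j 0) -> t <= w i 0 -> 0 <= (w - t *: d) j 0.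
  move=> w0 tw; rewrite !mxE subr_ge0.
  by have [->|ji] := eqVneq j i; rewrite ?eqxx /= ?mulr1 ?mulr0.
have Kv : K (col_mx (p - t *: d) (q - t *: d)).
  apply/coneP; split=> [j|j|]; first by apply: le_td; rewrite ?ge_min ?lexx.
    by apply: le_td; rewrite // ge_min lexx orbT.
  by rewrite opprB addrA subrK Apq.
have E : col_mx p q = t *: T_elt R i + col_mx (p - t *: d) (q - t *: d).
  by rewrite T_eltE scale_col_mx add_col_mx !(addrC (t *: d)) !subrK.
have [c c0 Ec] := ext _ _ (coneZ (ltW t0) (cone_T_elt i)) Kv E.
have cn0 : c != 0.
  apply: contraTneq (T_elt_neq0 i) => c_eq0; rewrite negbK; apply/eqP.
  by apply: (scalerI (lt0r_neq0 t0)); rewrite Ec c_eq0 !scale0r scaler0.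
exists (t / c); first by rewrite divr_gt0 // lt_def cn0.
by rewrite -[col_mx p q](scalerK cn0) -Ec scalerA mulrC.
Qed.

Lemma extreme_disjoint p q : extreme_ray K (col_mx p q) ->
  (forall i, p i 0 * q i 0 = 0) -> kernel_minimal (p - q).
Proof.
move=> [Kr r0 ext] pq; have /coneP[p0 q0 Ag] := Kr.
have Er : col_mx p q = pm (p - q) := esym (pm_sub p0 q0 pq).
split => //; first by rewrite -pm_eq0 -Er.
move: Er Ag; set g := p - q; clearbody g => Er Ag [h [h0 Ah /properP[shg [j jg jh]]]].
have [e e0 he] := small_multiple shg.
have Ag1 : AR *m (g + e *: h) = 0 by rewrite mulmxDr -scalemxAr Ah Ag scaler0 addr0.
have Ag2 : AR *m (g - e *: h) = 0 by rewrite mulmxBr -scalemxAr Ah Ag scaler0 subr0.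
(* g + e h and g - e h have the signs of g, so pm g is the midpoint of their images. *)
have conf : conformal (g + e *: h) (g - e *: h).
  by move=> i; rewrite !mxE mulr_addsub_ge0.
have E : pm g = 2^-1 *: pm (g + e *: h) + 2^-1 *: pm (g - e *: h).
  rewrite -scalerDr -pmD // addrACA subrr addr0 -mulr2n -scaler_nat pmZ //.
  by rewrite scalerA mulVf ?pnatr_eq0 // scale1r.
have K2 : 0 <= 2^-1 :> R by rewrite invr_ge0 ler0n.
have [c _ Ec] := ext _ _ (coneZ K2 (cone_pm Ag1)) (coneZ K2 (cone_pm Ag2)) (etrans Er E).
rewrite Er in Ec; have Eg := pmZ_inj Ec.
have Eh : h = ((2 * c - 1) / e) *: g.
  apply: (scalerI (lt0r_neq0 e0)); rewrite scalerA mulrC divfK ?lt0r_neq0 //.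
  by rewrite scalerBl scale1r -scalerA -Eg scalerA mulfV ?pnatr_eq0 // scale1r addrC addKr.
have k0 : (2 * c - 1) / e != 0 by apply: contraNneq h0 => k0; rewrite Eh k0 scale0r.
by move: jh; rewrite Eh suppZ // jg.
Qed.

Lemma extreme_rayP r : extreme_ray K r ->
  (exists2 g, kernel_minimal g & r = pm g) \/
  (exists i, exists2 c, 0 < c & r = c *: T_elt R i).
Proof.
rewrite -[r]vsubmxK; move: (usubmx r) (dsubmx r) => p q er.
have /coneP[p0 q0 _] : K (col_mx p q) by case: er.
have [/existsP[i /andP[pi qi]]|/existsPn pq] := boolP [exists i, (0 < p i 0) && (0 < q i 0)].
  by right; exists i; apply: extreme_overlap.
have disj i : p i 0 * q i 0 = 0.
  apply/eqP; rewrite mulf_eq0; have := pq i.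
  by rewrite negb_and !lt_def p0 q0 !andbT !negbK.
by left; exists (p - q); [apply: extreme_disjoint | rewrite pm_sub].
Qed.

End ExtremeRays.

Lemma rat_kernel (R : numFieldType) (k n : nat) (M : 'M[rat]_(k, n)) (g : 'cV[R]_n) :
  g != 0 -> map_mx ratr M *m g = 0 -> exists2 q : 'cV[rat]_n, q != 0 & M *m q = 0.
Proof.
move=> g0 Mg; have : ~~ row_free M^T.
  rewrite -(row_free_map (@ratr R)) -map_trmx; apply: contra g0 => fr.
  by rewrite -trmx_eq0 -(mulmx_free_eq0 _ fr) -trmx_mul Mg trmx0.
rewrite -kermx_eq0 => /rowV0Pn[v]; rewrite sub_kermx => /eqP vM v0.
by exists v^T; rewrite ?trmx_eq0 // -[M]trmxK -trmx_mul vM trmx0.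
Qed.

Lemma int_multiple (R : numFieldType) n (q : 'cV[rat]_n) :
  exists2 d : int, d != 0 & exists k : 'cV[int]_n,
    map_mx (fun z : int => z%:~R) k = d%:~R *: map_mx ratr q :> 'cV[R]_n.
Proof.
exists (\prod_j denq (q j 0)).
  by rewrite prodf_seq_neq0; apply/allP => j _; rewrite denq_neq0.
exists (\col_j (numq (q j 0) * \prod_(l < n | l != j) denq (q l 0))).
apply/colP => j; rewrite !mxE [in RHS](bigD1 j) //= !intrM /ratr.
have dn0 : (denq (q j 0))%:~R != 0 :> R by rewrite intr_eq0 denq_neq0.
by field.
Qed.

Definition primitive n (k : 'cV[int]_n) : Prop :=
  forall d : int, (forall i, k i 0 \in dvdz d) -> d = 1 \/ d = -1.

Lemma absz_eq1 (d : int) : `|d|%N = 1%N -> d = 1 \/ d = -1.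
Proof. by case: d => [[|[]]|[]] //= _; [left | right]. Qed.

Lemma primitiveN n (k : 'cV[int]_n) : primitive k -> primitive (- k).
Proof. by move=> pk d dk; apply: pk => i; have := dk i; rewrite mxE !unfold_in /dvdz abszN. Qed.

Lemma primitive_part n (k : 'cV[int]_n) : k != 0 ->
  exists2 D : nat, (0 < D)%N & exists2 k' : 'cV[int]_n, primitive k' & k = D%:Z *: k'.
Proof.
move=> k0; pose D := \big[gcdn/0%N]_i absz (k i 0).
have Dk i : (D%:Z %| k i 0%R)%Z by apply: (biggcdn_inf i).
have D0 : (0 < D)%N.
  rewrite lt0n; apply: contra k0 => /eqP D0; apply/eqP/matrixP => i j; rewrite (ord1 j) mxE.
  by have := Dk i; rewrite unfold_in /dvdz D0 dvd0n absz_eq0 => /eqP.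
exists D => //; exists (\col_i divz (k i 0) D).
  move=> d dk; apply: absz_eq1; apply/eqP; rewrite -dvdn1 -(dvdn_pmul2r D0) mul1n.
  apply/dvdn_biggcdP => i _; have := dk i; rewrite mxE unfold_in /dvdz.
  by rewrite -(dvdn_pmul2r D0) -[in X in _ -> X](divzK (Dk i)) abszM.
by apply/matrixP => i j; rewrite (ord1 j) !mxE mulrC divzK.
Qed.

Section Circuits.
Variables (R : realFieldType) (m n : nat) (A : 'M[rat]_(m, n)).
Local Notation AR := (AR R A).
Local Notation intv h := (map_mx (fun z : int => z%:~R) h : 'cV[R]_n).
Implicit Types (g : 'cV[R]_n) (h : 'cV[int]_n) (y : 'cV[R]_(n + n)).

Lemma is_circuitE h : is_circuit R A h <-> kernel_minimal A (intv h) /\ primitive h.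
Proof. by split=> [[? ? ? ?]|[[? ? ?] ?]]. Qed.

Lemma S_setE y : S_set A y <-> exists2 h, is_circuit R A h & y = pm (intv h).
Proof.
have pmE h : pm (intv h) =
    col_mx (\col_i Num.max ((h i 0)%:~R) 0) (\col_i Num.max (- (h i 0)%:~R) 0).
  by congr col_mx; apply/matrixP => i j; rewrite !mxE.
by split=> [[h [hc ->]]|[h hc ->]]; exists h; rewrite ?pmE.
Qed.

Lemma kernel_minimal_rat g : kernel_minimal A g ->
  exists q : 'cV[rat]_n, exists2 c, c != 0 & map_mx ratr q = c *: g.
Proof.
move=> gmin; have [g0 Ag _] := gmin.
(* D q = 0 forces q to vanish off supp g. *)
pose D : 'M[rat]_n := diag_mx (\row_j (g j 0 == 0)%:R).
have DAg : map_mx ratr (col_mx A D) *m g = 0.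
  rewrite map_col_mx mul_col_mx Ag map_diag_mx mul_diag_mx.
  apply/eqP; rewrite col_mx_eq0 eqxx /=; apply/eqP/matrixP => i j.
  by rewrite !mxE (ord1 j); case: eqP => [->|_]; rewrite ?mulr0 // rmorph0 mul0r.
have [q q0] := rat_kernel g0 DAg; rewrite mul_col_mx => /eqP; rewrite col_mx_eq0.
case/andP=> /eqP Aq /eqP Dq; exists q.
have Aq' : AR *m map_mx ratr q = 0 by rewrite -map_mxM Aq map_mx0.
have sq : supp (map_mx ratr q : 'cV[R]_n) \subset supp g.
  apply/subsetP => i; rewrite !inE mxE; apply: contraNneq => gi.
  have := congr1 (fun M : 'cV[rat]_n => M i 0) Dq.
  by rewrite mul_diag_mx !mxE gi eqxx mul1r => ->; rewrite rmorph0.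
have [c Ec] := kernel_minimal_collinear gmin Aq' sq.
by exists c => //; apply: contraNneq q0 => c0; rewrite -(map_mx_eq0 (@ratr R)) Ec c0 scale0r.
Qed.

Lemma kernel_minimal_circuit g : kernel_minimal A g ->
  exists h, is_circuit R A h /\ exists2 c, 0 < c & g = c *: intv h.
Proof.
move=> gmin; have [g0 _ _] := gmin.
have [q [c c0 Eq]] := kernel_minimal_rat gmin; have [d d0 [k Ek]] := int_multiple R q.
have dc0 : d%:~R * c != 0 by rewrite mulf_neq0 ?intr_eq0.
have k0 : k != 0.
  apply: contraTneq g0 => k0; rewrite negbK; apply/eqP/(scalerI dc0).
  by rewrite scaler0 -scalerA -Eq -Ek k0 map_mx0.
have [D D0 [h hp Ekh]] := primitive_part k0.
have DR0 : D%:R != 0 :> R by rewrite pnatr_eq0 -lt0n.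
pose s := d%:~R * c / D%:R; have s0 : s != 0 by rewrite mulf_neq0 ?invr_eq0.
have Eh : intv h = s *: g.
  apply: (scalerI DR0); rewrite scalerA mulrC divfK // -scalerA -Eq -Ek Ekh.
  by rewrite map_mxZ.
have /orP[s_lt0|s_gt0] := lt_total s0.
  exists (- h); split.
    apply/is_circuitE; rewrite map_mxN Eh -scaleNr.
    by split; [apply: kernel_minimalZ; rewrite ?oppr_eq0 | apply: primitiveN].
  by exists (- s)^-1; rewrite ?invr_gt0 ?oppr_gt0 // map_mxN Eh -scaleNr scalerK ?oppr_eq0.
exists h; split; first by apply/is_circuitE; rewrite Eh; split; [apply: kernel_minimalZ|].
by exists s^-1; rewrite ?invr_gt0 // Eh scalerK.
Qed.

End Circuits.

Lemma normalizedU (R : realFieldType) n (X Y : 'cV[R]_(n + n) -> Prop) x :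
  normalized (fun y => X y \/ Y y) x <-> normalized X x \/ normalized Y x.
Proof. by split=> [[r [Xr|Yr] ->]|[][r Xr ->]]; [left|right|..]; exists r; auto. Qed.

Lemma col_AR_eq0 (R : realFieldType) m n (A : 'M[rat]_(m, n)) i :
  (col i (AR R A) == 0) = (col i A == 0).
Proof. by rewrite /AR -map_col map_mx_eq0. Qed.

Lemma generates_extreme_rays_circuits (R : realFieldType) m n (A : 'M[rat]_(m, n)) :
  generates_extreme_rays (cone_A A)
    (fun y => S_set A y \/ exists2 i, i \in [set i | col i A != 0] & y = T_elt R i).
Proof.
split.
  move=> r [/S_setE[h /is_circuitE[hmin _] ->]|[i]]; first exact: extreme_pm.
  by rewrite inE -(col_AR_eq0 R) => /extreme_T_eltP Ai ->.
move=> r er; case/extreme_rayP: (er) => [[g gmin ->]|[i [c c0 Er]]].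
  have [h [hc [c c0 ->]]] := kernel_minimal_circuit gmin.
  exists (pm (map_mx (fun z : int => z%:~R) h)); last by exists c; rewrite ?pmZ ?ltW.
  by left; apply/S_setE; exists h.
exists (T_elt R i); last by exists c.
right; exists i => //; rewrite inE -(col_AR_eq0 R); apply/extreme_T_eltP.
by rewrite -[T_elt R i](scalerK (lt0r_neq0 c0)) -Er; apply: extreme_rayZ; rewrite ?invr_gt0.
Qed.

Unset Implicit Arguments.

Theorem corollary3 (R : realFieldType) (m n : nat) (A : 'M[rat]_(m, n)) :
  exists I : {set 'I_n},
    let T' := fun y : 'cV[R]_(n + n) => exists2 i, i \in I & y = T_elt R i in
    [/\ #|I| <= n,
        (forall y, T' y -> T_set y),
        generates_extreme_rays (cone_A A) (fun y => S_set A y \/ T' y) &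
        forall x, vertex (P_A A) x <-> (normalized (S_set A) x \/ normalized T' x)]%N.
Proof.
exists [set i | col i A != 0] => T'; have gen := generates_extreme_rays_circuits R A.
split => //.
- by rewrite (leq_trans (max_card _)) ?card_ord.
- by move=> y [i _ ->]; exists i.
- by move=> x; rewrite (vertex_normalized gen) normalizedU.
Qed.
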